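(* In $\boldsymbol{k}\{\{x,y\}\}$, up to terms of total degree $\ge5$, \begin{align*} \log_l(\exp_l(x)\exp_l(y)) ={}& x+y+\tfrac12[x,y]\\ &+\tfrac1{12}[x,[x,y]]-\tfrac13\langle x;x,y\rangle-\tfrac1{12}[y,[x,y]]-\tfrac16\langle y;x,y\rangle-\tfrac12\Phi(x;y,y)\\ &-\tfrac1{24}\langle x;x,[x,y]\rangle-\tfrac1{12}[x,\langle x;x,y\rangle]-\tfrac18\langle x,x;x,y\rangle\\ &+\tfrac1{24}[[x,[x,y]],y]-\tfrac1{24}[x,\langle y;x,y\rangle]-\tfrac14\Phi(x,x;y,y)-\tfrac14[x,\Phi(x;y,y)]\\ &-\tfrac1{24}[\langle x;x,y\rangle,y]-\tfrac1{24}\langle x;[x,y],y\rangle-\tfrac16\langle x,y;x,y\rangle+\tfrac1{24}\langle y,x;x,y\rangle\\ &+\tfrac1{12}[\Phi(x;y,y),y]+\tfrac1{24}\langle y;y,[x,y]\rangle-\tfrac1{24}\langle y,y;x,y\rangle-\tfrac16\Phi(x;y,y,y). \end{align*}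
   Context: $\boldsymbol{k}$ is a field of characteristic zero; $\boldsymbol{k}\{\{x,y\}\}$ is the unital algebra of formal power series in two non-associative variables. Powers are left-normed, $u^n:=((uu)\cdots)u$; $\exp_l(u):=\sum_{n\ge0}u^n/n!$, and $\log_l$ is its inverse (from series with constant term $1$ to series with zero constant term). $[a,b]:=ab-ba$. $\Delta,\epsilon$ are the continuous unital algebra homomorphisms with $x,y$ primitive; Sweedler notation $\Delta(u)=\sum u_{(1)}\otimes u_{(2)}$; left division $\backslash$ is the unique bilinear operation with $\sum u_{(1)}\backslash(u_{(2)}v)=\epsilon(u)v=\sum u_{(1)}(u_{(2)}\backslash v)$. Associator $(a,b,c):=(ab)c-a(bc)$. For $\underline{x}:=((x_1x_2)\cdots)x_m$, $\underline{y}:=((y_1y_2)\cdots)y_n$, $p(x_1,\dots,x_m;y_1,\dots,y_n;z):=\sum(\underline{x}_{(1)}\underline{y}_{(1)})\backslash(\underline{x}_{(2)},\underline{y}_{(2)},z)$ (a multilinear non-associative polynomial). For $m\ge1$: $\langle x_1,\dots,x_m;b,c\rangle:=-p(x_1,\dots,x_m;b;c)+p(x_1,\dots,x_m;c;b)$. For $m,n\ge1$: $\Phi(x_1,\dots,x_m;y_1,\dots,y_n;y_{n+1}):=\frac{1}{m!(n+1)!}\sum_{\sigma\in S_m,\,\tau\in S_{n+1}}p(x_{\sigma(1)},\dots,x_{\sigma(m)};y_{\tau(1)},\dots,y_{\tau(n)};y_{\tau(n+1)})$; in the formula, $\Phi(x;y,y)$ means $\Phi(x;y;y)$, $\Phi(x,x;y,y)$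 means $\Phi(x,x;y;y)$ and $\Phi(x;y,y,y)$ means $\Phi(x;y,y;y)$. *)

From HB Require Import structures.
From mathcomp Require Import all_boot all_order all_algebra all_fingroup.
Set Implicit Arguments. Unset Strict Implicit. Unset Printing Implicit Defensive.
Import Order.TTheory GRing.Theory.
Local Open Scope ring_scope.

(* A word is a nonempty non-associative monomial (binary tree whose    *)
(* leaves are x or y); a monomial is either the unit 1 (None) or a     *)
(* word.                                                               *)
Inductive word := Lx | Ly | Nd of word & word.

Fixpoint word_eqb (u v : word) : bool :=
  match u, v with
  | Lx, Lx => true
  | Ly, Ly => true
  | Nd a b, Nd c d => word_eqb a c && word_eqb b d
  | _, _ => false
  end.

Lemma word_eqP : Equality.axiom word_eqb.
Proof.
elim=> [| |a IHa b IHb] [| |c d] /=; try by constructor.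
case: (IHa c) => [->|H]; last by constructor; case.
case: (IHb d) => [->|H]; last by constructor; case.
by constructor.
Qed.

HB.instance Definition _ := hasDecEq.Build word word_eqP.

Definition mono := option word.

Fixpoint wdeg (w : word) : nat :=
  match w with Lx | Ly => 1%N | Nd a b => (wdeg a + wdeg b)%N end.

Definition deg (m : mono) : nat := if m is Some w then wdeg w else 0%N.

Fixpoint wordsF (fuel d : nat) : seq word :=
  match fuel with
  | 0 => [::]
  | f.+1 =>
    if d == 1%N then [:: Lx; Ly]
    else flatten [seq flatten [seq [seq Nd a b | b <- wordsF f (d - i)]
                              | a <- wordsF f i]
                 | i <- iota 1 d.-1]
  end.
Definition words (d : nat) : seq word := wordsF d d.

Definition monos_le (d : nat) : seq mono :=
  None :: [seq Some w | w <- flatten [seq words i | i <- iota 1 d]].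

Definition facts (m : mono) : seq (mono * mono) :=
  match m with
  | None => [:: (None, None)]
  | Some w => [:: (None, Some w); (Some w, None)] ++
              (if w is Nd a b then [:: (Some a, Some b)] else [::])
  end.

Section Series.
Variable K : fieldType.

(* k{{x,y}} : formal power series = coefficient functions on monomials *)
Definition series := mono -> K.
(* completed tensor product k{{x,y}} (x) k{{x,y}} *)
Definition tensor := mono -> mono -> K.

Definition zeroS : series := fun _ => 0.
Definition oneS : series := fun m => if m is None then 1 else 0.
Definition xS : series := fun m => match m with Some Lx => 1 | _ => 0 end.
Definition yS : series := fun m => match m with Some Ly => 1 | _ => 0 end.
Definition monoS (m0 : mono) : series := fun m => if m == m0 then 1 else 0.

Definition addS (f g : series) : series := fun m => f m + g m.
Definition oppS (f : series) : series := fun m => - f m.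
Definition scaleS (c : K) (f : series) : series := fun m => c * f m.
Definition mulS (f g : series) : series :=
  fun m => \sum_(p <- facts m) f p.1 * g p.2.

Definition commS (a b : series) : series := addS (mulS a b) (oppS (mulS b a)).
Definition assocS (a b c : series) : series :=
  addS (mulS (mulS a b) c) (oppS (mulS a (mulS b c))).

Fixpoint powS (u : series) (n : nat) : series :=
  if n is n'.+1 then mulS (powS u n') u else oneS.

(* exp_l(u) = sum_n u^n / n!  (for u with zero constant term, only n <= deg m
   contribute to the coefficient of a monomial m) *)
Definition exp_l (u : series) : series :=
  fun m => \sum_(i < (deg m).+1) powS u i m / (i`!)%:R.

Definition is_log_l (w z : series) : Prop :=
  z None = 0 /\ forall m, exp_l z m = w m.

Definition tens (f g : series) : tensor := fun m1 m2 => f m1 * g m2.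
Definition addT (F G : tensor) : tensor := fun m1 m2 => F m1 m2 + G m1 m2.
Definition mulT (F G : tensor) : tensor :=
  fun m1 m2 => \sum_(p <- facts m1) \sum_(q <- facts m2) F p.1 q.1 * G p.2 q.2.

(* coproduct on monomials: unital algebra hom with x, y primitive *)
Fixpoint deltaw (w : word) : tensor :=
  match w with
  | Lx => addT (tens xS oneS) (tens oneS xS)
  | Ly => addT (tens yS oneS) (tens oneS yS)
  | Nd a b => mulT (deltaw a) (deltaw b)
  end.
Definition delta_mono (m : mono) : tensor :=
  if m is Some w then deltaw w else tens oneS oneS.

Definition Delta (u : series) : tensor :=
  fun m1 m2 => \sum_(w <- monos_le (deg m1 + deg m2)) u w * delta_mono w m1 m2.

Definition eps (u : series) : K := u None.

(* Left division by a word w, determined by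
     sum w_(1) \ (w_(2) v) = eps(w) v = 0,
   i.e.  w \ v = - sum_{(w_(1), w_(2)), deg w_(1) < deg w} w_(1) \ (w_(2) v)
   (the term w_(1) = w, w_(2) = 1 has coefficient 1), with 1 \ v = v. *)
Fixpoint ldivw (fuel : nat) (w : word) (v : series) : series :=
  match fuel with
  | 0 => zeroS
  | f.+1 => fun m =>
      - (\sum_(m1 <- monos_le (wdeg w).-1) \sum_(m2 <- monos_le (wdeg w))
           deltaw w m1 m2 *
           (match m1 with
            | None => mulS (monoS m2) v
            | Some w1 => ldivw f w1 (mulS (monoS m2) v)
            end) m)
  end.

Definition ldiv (u v : series) : series :=
  fun m => u None * v m +
     \sum_(w <- flatten [seq words i | i <- iota 1 (deg m)])
        u (Some w) * ldivw (wdeg w) w v m.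

Definition lnprod (s : seq series) : series :=
  if s is a :: s' then foldl mulS a s' else oneS.

(* p(x1..xm; y1..yn; z) = sum (X_(1) Y_(1)) \ (X_(2), Y_(2), z) *)
Definition pS (xs ys : seq series) (z : series) : series :=
  fun m =>
    let d := deg m in
    let DX := Delta (lnprod xs) in
    let DY := Delta (lnprod ys) in
    \sum_(a1 <- monos_le d) \sum_(a2 <- monos_le d)
    \sum_(b1 <- monos_le d) \sum_(b2 <- monos_le d)
      DX a1 a2 * DY b1 b2 *
      ldiv (mulS (monoS a1) (monoS b1)) (assocS (monoS a2) (monoS b2) z) m.

Definition brk (xs : seq series) (b c : series) : series :=
  addS (oppS (pS xs [:: b] c)) (pS xs [:: c] b).

Definition PhiS (m n : nat) (xs : 'I_m -> series) (ys : 'I_n.+1 -> series)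
  : series :=
  fun mo =>
    ((m`!)%:R * ((n.+1)`!)%:R)^-1 *
    \sum_(s : 'S_m) \sum_(t : 'S_n.+1)
      pS [seq xs (s i) | i <- enum 'I_m]
         [seq ys (t (lift ord_max i)) | i <- enum 'I_n]
         (ys (t ord_max)) mo.

Definition q (a : int) (b : nat) : K := a%:~R / b%:R.

Definition sumS (s : seq series) : series := foldr addS zeroS s.

Definition rhs : series :=
  let x := xS in let y := yS in
  let xy := commS x y in
  let ang1 (a b c : series) := brk [:: a] b c in
  let ang2 (a a' b c : series) := brk [:: a; a'] b c in
  let Phi_x_yy := PhiS (fun _ : 'I_1 => x) (fun _ : 'I_2 => y) in
  let Phi_xx_yy := PhiS (fun _ : 'I_2 => x) (fun _ : 'I_2 => y) in
  let Phi_x_yyy := PhiS (fun _ : 'I_1 => x) (fun _ : 'I_3 => y) in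
  sumS [::
    x; y; scaleS (q 1 2) xy;
    scaleS (q 1 12) (commS x xy);
    scaleS (q (-1) 3) (ang1 x x y);
    scaleS (q (-1) 12) (commS y xy);
    scaleS (q (-1) 6) (ang1 y x y);
    scaleS (q (-1) 2) Phi_x_yy;
    scaleS (q (-1) 24) (ang1 x x xy);
    scaleS (q (-1) 12) (commS x (ang1 x x y));
    scaleS (q (-1) 8) (ang2 x x x y);
    scaleS (q 1 24) (commS (commS x xy) y);
    scaleS (q (-1) 24) (commS x (ang1 y x y));
    scaleS (q (-1) 4) Phi_xx_yy;
    scaleS (q (-1) 4) (commS x Phi_x_yy);
    scaleS (q (-1) 24) (commS (ang1 x x y) y);
    scaleS (q (-1) 24) (ang1 x xy y);
    scaleS (q (-1) 6) (ang2 x y x y);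
    scaleS (q 1 24) (ang2 y x x y);
    scaleS (q 1 12) (commS Phi_x_yy y);
    scaleS (q 1 24) (ang1 y y xy);
    scaleS (q (-1) 24) (ang2 y y x y);
    scaleS (q (-1) 6) Phi_x_yyy ].

End Series.

From HB Require Import structures.
From mathcomp Require Import all_boot all_order all_algebra all_fingroup.
From mathcomp Require Import ring.
From Stdlib Require Import FunctionalExtensionality.
Set Implicit Arguments. Unset Strict Implicit. Unset Printing Implicit Defensive.
Import GRing.Theory.
Local Open Scope ring_scope.

(* The left logarithm is pinned down degree by degree: the coefficient of a word
   [w] in [exp_l z] is [z w] plus a polynomial in the coefficients of [z] on
   strictly shorter words.  So it suffices to check [exp_l rhs = exp_l x exp_l y]
   on the finitely many monomials of degree at most 4.  Each Phi has all its
   arguments equal, so in characteristic 0 its symmetrisation collapses to a single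
   p.  Then every coefficient involved is rational and every operation commutes
   with the embedding of Q into the field, so the check is done once, by
   evaluation, over Q.  It is made feasible by restricting the sums defining p to
   the few nonzero terms of the coproducts, using homogeneity. *)

Lemma wdeg_gt0 w : (0 < wdeg w)%N.
Proof. by elim: w => //= a Ha b Hb; rewrite addn_gt0 Ha. Qed.

Lemma deg_facts m p : p \in facts m -> (deg p.1 + deg p.2)%N = deg m.
Proof.
case: m => [[| |a b]|] /=; rewrite !inE.
- by case/orP => /eqP ->.
- by case/orP => /eqP ->.
- by case/or3P => /eqP -> //=; rewrite addn0.
- by move/eqP ->.
Qed.

Lemma wdeg_wordsF f d w : w \in wordsF f d -> wdeg w = d.
Proof.
elim: f d w => [|f IH] d w //=.
case: eqP => [-> | _]; first by rewrite !inE => /orP [] /eqP ->.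
case/flatten_mapP => i; rewrite mem_iota => /andP [_ lt_i_d].
case/flatten_mapP => a /IH da /mapP [b /IH db ->] /=.
by rewrite db da subnKC // (leq_trans _ (leq_pred d)) // -ltnS -add1n.
Qed.

Lemma mem_wordsF w f : (wdeg w <= f)%N -> w \in wordsF f (wdeg w).
Proof.
elim: w f => [| |a IHa b IHb] [|f] //=; rewrite ?inE ?eqxx ?orbT //.
  by move=> H; move: (leq_trans (wdeg_gt0 a) (leq_trans (leq_addr _ _) H)).
move=> H; have ga := wdeg_gt0 a; have gb := wdeg_gt0 b.
case: ifP => [/eqP e|_]; first by move: (leq_add ga gb); rewrite e.
apply/flatten_mapP; exists (wdeg a).
  rewrite mem_iota add1n ga /= prednK; last by rewrite addn_gt0 ga.
  by rewrite -{1}(addn0 (wdeg a)) ltn_add2l.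
apply/flatten_mapP; exists a.
  by apply: IHa; rewrite -ltnS; apply: leq_trans H; rewrite -addn1 leq_add2l.
rewrite addKn; apply: map_f; apply: IHb.
by rewrite -ltnS; apply: leq_trans H; rewrite -add1n leq_add2r.
Qed.

Lemma mem_monos_le m d : (deg m <= d)%N -> m \in monos_le d.
Proof.
case: m => [w|] /= H; rewrite /monos_le inE //=.
apply: map_f; apply/flatten_mapP; exists (wdeg w).
  by rewrite mem_iota add1n wdeg_gt0 ltnS.
exact: mem_wordsF.
Qed.

Lemma big_monos_le_trunc (V : nmodType) k d (F : mono -> V) : (k <= d)%N ->
  (forall m, (k < deg m)%N -> F m = 0) ->
  \sum_(m <- monos_le d) F m = \sum_(m <- monos_le k) F m.
Proof.
move=> le_kd F0; rewrite /monos_le -(subnKC le_kd) iotaD !map_cat flatten_cat.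
rewrite map_cat -cat_cons big_cat /= [X in _ + X]big1_seq ?addr0 //.
move=> m /andP[_ /mapP[w /flatten_mapP[i]]].
by rewrite mem_iota add1n => /andP[lt_ki _] /wdeg_wordsF wi ->; apply: F0; rewrite /= wi.
Qed.

Section Homogeneous.
Variable K : fieldType.
Implicit Types u v : series K.

Definition homog k u := forall m, deg m != k -> u m = 0.

Lemma homog_xS : homog 1 (xS K).
Proof. by case=> [[| |? ?]|]. Qed.

Lemma homog_yS : homog 1 (yS K).
Proof. by case=> [[| |? ?]|]. Qed.

Lemma homog_monoS n : homog (deg n) (monoS K n).
Proof. by move=> m; rewrite /monoS; case: (m =P n) => // ->; rewrite eqxx. Qed.
Arguments homog_monoS : clear implicits.

Lemma homog_addS k u v : homog k u -> homog k v -> homog k (addS u v).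
Proof. by move=> hu hv m H; rewrite /addS hu ?hv ?addr0. Qed.

Lemma homog_oppS k u : homog k u -> homog k (oppS u).
Proof. by move=> hu m H; rewrite /oppS hu ?oppr0. Qed.

Lemma homog_mulS k1 k2 u v : homog k1 u -> homog k2 v -> homog (k1 + k2)%N (mulS u v).
Proof.
move=> hu hv m H; rewrite /mulS big1_seq // => p /andP [_ pm].
have [e1|e1] := eqVneq (deg p.1) k1; last by rewrite hu ?mul0r.
by rewrite hv ?mulr0 //; apply: contra H => /eqP e2; rewrite -(deg_facts pm) e1 e2.
Qed.

Lemma homog_commS k1 k2 u v : homog k1 u -> homog k2 v -> homog (k1 + k2)%N (commS u v).
Proof.
move=> hu hv; apply: homog_addS; first exact: homog_mulS.
by apply: homog_oppS; rewrite addnC; apply: homog_mulS.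
Qed.

Lemma homog_assocS k1 k2 k3 u v w : homog k1 u -> homog k2 v -> homog k3 w ->
  homog (k1 + k2 + k3)%N (assocS u v w).
Proof.
move=> hu hv hw; apply: homog_addS; first exact: homog_mulS (homog_mulS hu hv) hw.
by apply: homog_oppS; rewrite -addnA; exact: homog_mulS hu (homog_mulS hv hw).
Qed.

Lemma deltaw_eq0 w m1 m2 : (deg m1 + deg m2 != wdeg w)%N -> deltaw K w m1 m2 = 0.
Proof.
elim: w m1 m2 => [| |a IHa b IHb] m1 m2 /=; last first.
  move=> H; rewrite /mulT big1_seq // => p /andP [_ pm1].
  rewrite big1_seq // => q /andP [_ qm2].
  have [Ha|Ha] := eqVneq (deg p.1 + deg q.1)%N (wdeg a); last by rewrite IHa ?mul0r.
  have [Hb|Hb] := eqVneq (deg p.2 + deg q.2)%N (wdeg b); last by rewrite IHb ?mulr0.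
  by move: H; rewrite -(deg_facts pm1) -(deg_facts qm2) -Ha -Hb addnACA eqxx.
all: by case: m1 => [[| |? ?]|]; case: m2 => [[| |? ?]|];
  rewrite /addT /tens /= ?mulr0 ?mul0r ?addr0.
Qed.

Lemma Delta_eq0 k u m1 m2 : homog k u -> (0 < k)%N -> (deg m1 + deg m2 != k)%N ->
  Delta u m1 m2 = 0.
Proof.
move=> hu k_gt0 H; rewrite /Delta big1 // => -[w|] _ /=.
  have [e|e] := eqVneq (wdeg w) k; last by rewrite hu ?mul0r.
  by rewrite deltaw_eq0 ?mulr0 // e.
by rewrite hu ?mul0r // eq_sym -lt0n.
Qed.

Lemma homog_ldivw f w v kv : homog kv v -> homog (wdeg w + kv)%N (ldivw f w v).
Proof.
elim: f w v kv => [|f IH] w v kv hv m H //=.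
rewrite big1 ?oppr0 // => m1 _; rewrite big1 // => m2 _.
have [e|e] := eqVneq (deg m1 + deg m2)%N (wdeg w); last by rewrite deltaw_eq0 ?mul0r.
have hm2v := homog_mulS (homog_monoS m2) hv.
case: m1 e => [w1|] /= e; first by rewrite (IH w1 _ _ hm2v) ?mulr0 // addnA e.
by rewrite hm2v ?mulr0 // -(add0n (deg m2)) e.
Qed.

Lemma homog_ldiv ku kv u v : homog ku u -> homog kv v -> homog (ku + kv)%N (ldiv u v).
Proof.
move=> hu hv m H; rewrite /ldiv big1 ?addr0 => [|w _].
  have [k0|k0] := eqVneq ku 0%N; last by rewrite hu ?mul0r // eq_sym.
  by rewrite hv ?mulr0 // -(add0n kv) -k0.
have [e|e] := eqVneq (wdeg w) ku; last by rewrite hu ?mul0r.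
by rewrite (homog_ldivw (wdeg w) (w:=w) hv) ?mulr0 // e.
Qed.

Lemma homog_pS kx ky kz xs ys z : homog kx (lnprod xs) -> homog ky (lnprod ys) ->
  homog kz z -> (0 < kx)%N -> (0 < ky)%N -> homog (kx + ky + kz)%N (pS xs ys z).
Proof.
move=> hx hy hz kx_gt0 ky_gt0 m H; rewrite /pS /=.
rewrite big1 // => a1 _; rewrite big1 // => a2 _; rewrite big1 // => b1 _.
rewrite big1 // => b2 _.
have [ea|ea] := eqVneq (deg a1 + deg a2)%N kx; last by rewrite (Delta_eq0 hx) ?mul0r.
have [eb|eb] := eqVneq (deg b1 + deg b2)%N ky; last by rewrite (Delta_eq0 hy) ?mulr0 ?mul0r.
rewrite (homog_ldiv (homog_mulS (homog_monoS a1) (homog_monoS b1))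
   (homog_assocS (homog_monoS a2) (homog_monoS b2) hz)) ?mulr0 //.
by rewrite addnA addnACA ea eb.
Qed.

End Homogeneous.

Section SparseEvaluation.
Variable K : fieldType.
Implicit Types u v z : series K.

Lemma mul1S u : mulS (oneS K) u = u.
Proof.
apply: functional_extensionality => -[[| |a b]|];
  by rewrite /mulS !big_cons ?big_nil /= ?mul1r ?mul0r ?addr0.
Qed.

Lemma mulS1 u : mulS u (oneS K) = u.
Proof.
apply: functional_extensionality => -[[| |a b]|];
  by rewrite /mulS !big_cons ?big_nil /= ?mulr1 ?mulr0 ?addr0 ?add0r.
Qed.

Lemma mulS0 u : mulS u (zeroS K) = zeroS K.
Proof.
by apply: functional_extensionality => m; rewrite /mulS big1 // => p _; rewrite mulr0.
Qed.

Lemma monoS_None : monoS K None = oneS K.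
Proof. by apply: functional_extensionality => -[]. Qed.

Lemma assoc1S v z : assocS (monoS K None) v z = zeroS K.
Proof.
rewrite monoS_None /assocS !mul1S.
by apply: functional_extensionality => m; rewrite /addS /oppS subrr.
Qed.

Lemma assocS1 u z : assocS u (monoS K None) z = zeroS K.
Proof.
rewrite monoS_None /assocS mul1S mulS1.
by apply: functional_extensionality => m; rewrite /addS /oppS subrr.
Qed.

Lemma ldivw0 f w : ldivw f w (zeroS K) = zeroS K.
Proof.
elim: f w => [|f IH] w //=; apply: functional_extensionality => m.
rewrite big1 ?oppr0 // => m1 _; rewrite big1 // => m2 _.
by case: m1 => [w1|]; rewrite mulS0 ?IH /zeroS mulr0.
Qed.

Lemma ldiv0 u : ldiv u (zeroS K) = zeroS K.
Proof.
apply: functional_extensionality => m; rewrite /ldiv big1 ?mulr0 ?addr0 // => w _.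
by rewrite ldivw0 /zeroS mulr0.
Qed.

Definition ldiv_sparse u v : series K := fun m =>
  u None * v m + \sum_(w <- flatten [seq words i | i <- iota 1 (deg m)])
    (let c := u (Some w) in if c == 0 then 0 else c * ldivw (wdeg w) w v m).

Lemma ldiv_sparseE : ldiv_sparse = @ldiv K.
Proof.
apply: functional_extensionality => u; apply: functional_extensionality => v.
apply: functional_extensionality => m; rewrite /ldiv /ldiv_sparse; congr (_ + _).
by apply: eq_bigr => w _ /=; case: eqP => // ->; rewrite mul0r.
Qed.

(* Evaluating [D] only on the pairs of the right total degree, before filtering
   out its zeros, is what keeps the evaluation of [pS_fast] below feasible. *)
Definition sparse_terms k (D : tensor K) : seq ((mono * mono) * K) :=
  let pairs := [seq (a1, a2) | a1 <- monos_le k, a2 <- monos_le k] in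
  let admissible := [seq p <- pairs | (deg p.1 + deg p.2 == k)%N && (p.2 != None)] in
  [seq t <- [seq (p, D p.1 p.2) | p <- admissible] | t.2 != 0].

Lemma big_Delta_sparse k d u (F : mono -> mono -> K) :
  homog k u -> (0 < k)%N -> (k <= d)%N -> (forall a, F a None = 0) ->
  \sum_(a1 <- monos_le d) \sum_(a2 <- monos_le d) Delta u a1 a2 * F a1 a2 =
  \sum_(t <- sparse_terms k (Delta u)) t.2 * F t.1.1 t.1.2.
Proof.
move=> hu k_gt0 le_kd F0.
have D0 a1 a2 : (deg a1 + deg a2 != k)%N -> Delta u a1 a2 * F a1 a2 = 0.
  by move=> H; rewrite (Delta_eq0 hu) ?mul0r.
have inner a1 : \sum_(a2 <- monos_le d) Delta u a1 a2 * F a1 a2 =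
                \sum_(a2 <- monos_le k) Delta u a1 a2 * F a1 a2.
  apply: big_monos_le_trunc => // a2 lt_k_a2.
  by rewrite D0 // neq_ltn (leq_trans lt_k_a2) ?leq_addl ?orbT.
rewrite (eq_bigr _ (fun a1 _ => inner a1)) (big_monos_le_trunc le_kd) => [|a1 lt_k_a1].
  rewrite /sparse_terms [RHS]big_filter [RHS]big_map [RHS]big_filter_cond.
  rewrite [RHS]big_mkcond [RHS]big_allpairs /=.
  apply: eq_bigr => a1 _; apply: eq_bigr => a2 _.
  case: eqP => [_|/eqP/D0 -> //]; case: a2 => [w|] /=; last by rewrite F0 mulr0.
  by case: eqP => [->|]; rewrite ?mul0r.
by rewrite big1 // => a2 _; rewrite D0 // neq_ltn (leq_trans lt_k_a1) ?leq_addr ?orbT.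
Qed.

Definition pS_fast kx ky kz xs ys z : series K :=
  let SX := sparse_terms kx (Delta (lnprod xs)) in
  let SY := sparse_terms ky (Delta (lnprod ys)) in
  fun m => if (deg m != kx + ky + kz)%N then 0 else
    \sum_(s <- SX) \sum_(t <- SY) s.2 * (t.2 *
      ldiv_sparse (mulS (monoS K s.1.1) (monoS K t.1.1))
                  (assocS (monoS K s.1.2) (monoS K t.1.2) z) m).

Lemma pS_fastE kx ky kz xs ys z :
  homog kx (lnprod xs) -> homog ky (lnprod ys) -> homog kz z ->
  (0 < kx)%N -> (0 < ky)%N -> pS xs ys z = pS_fast kx ky kz xs ys z.
Proof.
move=> hx hy hz kx_gt0 ky_gt0; apply: functional_extensionality => m.
rewrite /pS_fast ldiv_sparseE; case: ifPn => [|/negPn/eqP dm]; first exact: homog_pS.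
have le_kx : (kx <= deg m)%N by rewrite dm -addnA leq_addr.
have le_ky : (ky <= deg m)%N by rewrite dm addnAC leq_addl.
rewrite /pS /=.
transitivity (\sum_(a1 <- monos_le (deg m)) \sum_(a2 <- monos_le (deg m))
  Delta (lnprod xs) a1 a2 * \sum_(b1 <- monos_le (deg m)) \sum_(b2 <- monos_le (deg m))
    Delta (lnprod ys) b1 b2 *
    ldiv (mulS (monoS K a1) (monoS K b1)) (assocS (monoS K a2) (monoS K b2) z) m).
  apply: eq_bigr => a1 _; apply: eq_bigr => a2 _; rewrite mulr_sumr.
  by apply: eq_bigr => b1 _; rewrite mulr_sumr; apply: eq_bigr => b2 _; rewrite mulrA.
rewrite (big_Delta_sparse hx) // => [|a1]; last first.
  by rewrite big1 // => b1 _; rewrite big1 // => b2 _; rewrite assoc1S ldiv0 mulr0.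
apply: eq_bigr => s _.
by rewrite -mulr_sumr (big_Delta_sparse hy) // => b1; rewrite assocS1 ldiv0.
Qed.

End SparseEvaluation.

Section RhsWith.
Variable K : fieldType.

(* [P kx ky kz xs ys z] stands for p(xs; ys; z), where [kx], [ky] and [kz] are
   the degrees of [lnprod xs], [lnprod ys] and [z]. *)
Definition rhs_with
    (P : nat -> nat -> nat -> seq (series K) -> seq (series K) -> series K -> series K) :
    series K :=
  let x := xS K in let y := yS K in
  let xy := commS x y in
  let ang kx kb kc xs b c := addS (oppS (P kx kb kc xs [:: b] c)) (P kx kc kb xs [:: c] b) in
  let Phi_x_yy := P 1 1 1 [:: x] [:: y] y in
  let Phi_xx_yy := P 2 1 1 [:: x; x] [:: y] y in
  let Phi_x_yyy := P 1 2 1 [:: x] [:: y; y] y in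
  sumS [::
    x; y; scaleS (q K 1 2) xy;
    scaleS (q K 1 12) (commS x xy);
    scaleS (q K (-1) 3) (ang 1 1 1 [:: x] x y);
    scaleS (q K (-1) 12) (commS y xy);
    scaleS (q K (-1) 6) (ang 1 1 1 [:: y] x y);
    scaleS (q K (-1) 2) Phi_x_yy;
    scaleS (q K (-1) 24) (ang 1 1 2 [:: x] x xy);
    scaleS (q K (-1) 12) (commS x (ang 1 1 1 [:: x] x y));
    scaleS (q K (-1) 8) (ang 2 1 1 [:: x; x] x y);
    scaleS (q K 1 24) (commS (commS x xy) y);
    scaleS (q K (-1) 24) (commS x (ang 1 1 1 [:: y] x y));
    scaleS (q K (-1) 4) Phi_xx_yy;
    scaleS (q K (-1) 4) (commS x Phi_x_yy);
    scaleS (q K (-1) 24) (commS (ang 1 1 1 [:: x] x y) y);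
    scaleS (q K (-1) 24) (ang 1 2 1 [:: x] xy y);
    scaleS (q K (-1) 6) (ang 2 1 1 [:: x; y] x y);
    scaleS (q K 1 24) (ang 2 1 1 [:: y; x] x y);
    scaleS (q K 1 12) (commS Phi_x_yy y);
    scaleS (q K 1 24) (ang 1 1 2 [:: y] y xy);
    scaleS (q K (-1) 24) (ang 2 1 1 [:: y; y] x y);
    scaleS (q K (-1) 6) Phi_x_yyy ].

Lemma PhiS_const (charK0 : [pchar K] =i pred0) m n (a b : series K) :
  PhiS (fun _ : 'I_m => a) (fun _ : 'I_n.+1 => b) = pS (nseq m a) (nseq n b) b.
Proof.
have map_const T U (c : U) (s : seq T) : [seq c | _ <- s] = nseq (size s) c.
  by elim: s => //= _ s ->.
apply: functional_extensionality => mo; rewrite /PhiS.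
under eq_bigr do under eq_bigr do rewrite !map_const !size_enum_ord.
rewrite !sumr_const !card_Sn -mulrnA (mulnC (n.+1)`!) -[pS _ _ _ mo *+ _]mulr_natl.
rewrite (natrM _ m`! (n.+1)`!) mulKf //.
by rewrite mulf_neq0 // (pcharf0P _).1 // -lt0n fact_gt0.
Qed.

Lemma rhs_with_pS (charK0 : [pchar K] =i pred0) : rhs K = rhs_with (fun _ _ _ => @pS K).
Proof. by rewrite /rhs !PhiS_const. Qed.

Lemma eq_rhs_with P1 P2 :
  (forall kx ky kz xs ys z, homog kx (lnprod xs) -> homog ky (lnprod ys) -> homog kz z ->
     (0 < kx)%N -> (0 < ky)%N -> P1 kx ky kz xs ys z = P2 kx ky kz xs ys z) ->
  rhs_with P1 = rhs_with P2.
Proof.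
move=> eqP12; have hx := homog_xS K; have hy := homog_yS K.
have hxy : homog 2 (commS (xS K) (yS K)) := homog_commS hx hy.
have hmul a b : homog 1 a -> homog 1 b -> homog 2 (lnprod [:: a; b]) := @homog_mulS _ 1 1 a b.
rewrite /rhs_with; cbv zeta beta; rewrite !eqP12 //; exact: hmul.
Qed.

Lemma rhs_with_fast : rhs_with (fun _ _ _ => @pS K) = rhs_with (@pS_fast K).
Proof. by apply: eq_rhs_with => *; apply: pS_fastE. Qed.

End RhsWith.

Section MapSeries.
Variables (F L : fieldType) (f : {rmorphism F -> L}).

Definition mapS (u : series F) : series L := fun m => f (u m).
Definition mapT (D : tensor F) : tensor L := fun m1 m2 => f (D m1 m2).

Lemma mapS_x : mapS (xS F) = xS L.
Proof.
by apply: functional_extensionality => -[[| |? ?]|]; rewrite /mapS ?rmorph0 ?rmorph1.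
Qed.

Lemma mapS_y : mapS (yS F) = yS L.
Proof.
by apply: functional_extensionality => -[[| |? ?]|]; rewrite /mapS ?rmorph0 ?rmorph1.
Qed.

Lemma mapS_one : mapS (oneS F) = oneS L.
Proof. by apply: functional_extensionality => -[?|]; rewrite /mapS ?rmorph0 ?rmorph1. Qed.

Lemma mapS_zero : mapS (zeroS F) = zeroS L.
Proof. by apply: functional_extensionality => ?; rewrite /mapS rmorph0. Qed.

Lemma mapS_mono n : mapS (monoS F n) = monoS L n.
Proof.
apply: functional_extensionality => m; rewrite /mapS /monoS.
by case: eqP; rewrite ?rmorph0 ?rmorph1.
Qed.

Lemma mapS_add u v : mapS (addS u v) = addS (mapS u) (mapS v).
Proof. by apply: functional_extensionality => m; rewrite /mapS /addS rmorphD. Qed.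

Lemma mapS_opp u : mapS (oppS u) = oppS (mapS u).
Proof. by apply: functional_extensionality => m; rewrite /mapS /oppS rmorphN. Qed.

Lemma mapS_scale c u : mapS (scaleS c u) = scaleS (f c) (mapS u).
Proof. by apply: functional_extensionality => m; rewrite /mapS /scaleS rmorphM. Qed.

Lemma mapS_mul u v : mapS (mulS u v) = mulS (mapS u) (mapS v).
Proof.
apply: functional_extensionality => m; rewrite /mapS /mulS rmorph_sum.
by apply: eq_bigr => p _; rewrite rmorphM.
Qed.

Lemma mapS_comm u v : mapS (commS u v) = commS (mapS u) (mapS v).
Proof. by rewrite /commS mapS_add mapS_opp !mapS_mul. Qed.

Lemma mapS_assoc u v w : mapS (assocS u v w) = assocS (mapS u) (mapS v) (mapS w).
Proof. by rewrite /assocS mapS_add mapS_opp !mapS_mul. Qed.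

Lemma mapS_sum s : mapS (sumS s) = sumS (map mapS s).
Proof. by elim: s => [|u s IH] /=; rewrite ?mapS_zero // mapS_add IH. Qed.

Lemma mapS_lnprod s : mapS (lnprod s) = lnprod (map mapS s).
Proof.
case: s => [|a s] /=; first exact: mapS_one.
by elim: s a => [|b s IH] a //=; rewrite IH mapS_mul.
Qed.

Lemma mapS_powS u n : mapS (powS u n) = powS (mapS u) n.
Proof. by elim: n => [|n IH] /=; rewrite ?mapS_one // mapS_mul IH. Qed.

Lemma rmorph_q a b : f (q F a b) = q L a b.
Proof. by rewrite /q fmorph_div rmorph_int rmorph_nat. Qed.

Lemma mapS_exp u : mapS (exp_l u) = exp_l (mapS u).
Proof.
apply: functional_extensionality => m; rewrite /mapS /exp_l rmorph_sum.
by apply: eq_bigr => i _; rewrite fmorph_div rmorph_nat -/(mapS _ m) mapS_powS.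
Qed.

Lemma mapT_tens u v : mapT (tens u v) = tens (mapS u) (mapS v).
Proof.
apply: functional_extensionality => m1; apply: functional_extensionality => m2.
by rewrite /mapT /tens rmorphM.
Qed.

Lemma mapT_add D E : mapT (addT D E) = addT (mapT D) (mapT E).
Proof.
apply: functional_extensionality => m1; apply: functional_extensionality => m2.
by rewrite /mapT /addT rmorphD.
Qed.

Lemma mapT_mul D E : mapT (mulT D E) = mulT (mapT D) (mapT E).
Proof.
apply: functional_extensionality => m1; apply: functional_extensionality => m2.
rewrite /mapT /mulT rmorph_sum; apply: eq_bigr => p _; rewrite rmorph_sum.
by apply: eq_bigr => p' _; rewrite rmorphM.
Qed.

Lemma mapT_deltaw w : mapT (deltaw F w) = deltaw L w.
Proof.
elim: w => [| |a IHa b IHb] /=; last by rewrite mapT_mul IHa IHb.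
  by rewrite mapT_add !mapT_tens mapS_x mapS_one.
by rewrite mapT_add !mapT_tens mapS_y mapS_one.
Qed.

Lemma mapT_Delta u : mapT (Delta u) = Delta (mapS u).
Proof.
apply: functional_extensionality => m1; apply: functional_extensionality => m2.
rewrite /mapT /Delta rmorph_sum; apply: eq_bigr => -[w|] _; rewrite rmorphM.
  by rewrite -[f (deltaw F w m1 m2)]/(mapT _ m1 m2) mapT_deltaw.
by rewrite -[f (tens _ _ m1 m2)]/(mapT _ m1 m2) mapT_tens mapS_one.
Qed.

Lemma mapS_ldivw n w v : mapS (ldivw n w v) = ldivw n w (mapS v).
Proof.
elim: n w v => [|n IH] w v /=; first exact: mapS_zero.
apply: functional_extensionality => m; rewrite /mapS rmorphN rmorph_sum; congr (- _).
apply: eq_bigr => m1 _; rewrite rmorph_sum; apply: eq_bigr => m2 _.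
rewrite rmorphM -[f (deltaw F w m1 m2)]/(mapT _ m1 m2) mapT_deltaw; congr (_ * _).
by case: m1 => [w1|]; rewrite -/(mapS _ m) ?IH mapS_mul mapS_mono.
Qed.

Lemma mapS_ldiv u v : mapS (ldiv u v) = ldiv (mapS u) (mapS v).
Proof.
apply: functional_extensionality => m; rewrite /mapS /ldiv rmorphD rmorphM rmorph_sum.
by congr (_ + _); apply: eq_bigr => w _; rewrite rmorphM -/(mapS _ m) mapS_ldivw.
Qed.

Lemma mapS_pS xs ys z : mapS (pS xs ys z) = pS (map mapS xs) (map mapS ys) (mapS z).
Proof.
apply: functional_extensionality => m; rewrite /mapS /pS /= -!mapS_lnprod -!mapT_Delta.
rewrite rmorph_sum; apply: eq_bigr => a1 _; rewrite rmorph_sum; apply: eq_bigr => a2 _.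
rewrite rmorph_sum; apply: eq_bigr => b1 _; rewrite rmorph_sum; apply: eq_bigr => b2 _.
by rewrite !rmorphM -/(mapS _ m) mapS_ldiv mapS_mul mapS_assoc !mapS_mono.
Qed.

Lemma mapS_rhs_with : mapS (rhs_with (fun _ _ _ => @pS F)) = rhs_with (fun _ _ _ => @pS L).
Proof.
rewrite /rhs_with; cbv zeta beta; rewrite mapS_sum /=.
by do 2 rewrite ?(mapS_scale, rmorph_q, mapS_comm, mapS_add, mapS_opp, mapS_pS,
                  mapS_x, mapS_y) /=.
Qed.

End MapSeries.

Section RatEmbedding.
Variable K : fieldType.
Hypothesis charK0 : [pchar K] =i pred0.

Lemma intr_eq0_pchar0 (z : int) : (z%:~R == 0 :> K) = (z == 0).
Proof.
have natr_eq0 := (pcharf0P K).1 charK0.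
by case: z => n; rewrite ?NegzE ?mulrNz ?oppr_eq0 -[_%:~R]/(_%:R) natr_eq0.
Qed.

Lemma ratr_frac (x : rat) (n d : int) : d != 0 -> x * d%:~R = n%:~R ->
  ratr x = n%:~R / d%:~R :> K.
Proof.
move=> d0 xd; have nd : numq x * d = n * denq x.
  by apply: (@intr_inj rat); rewrite !intrM numqE mulrAC xd.
by apply/eqP; rewrite /ratr eqr_div ?intr_eq0_pchar0 ?denq_neq0 // -!intrM nd.
Qed.

Lemma ratrD : {morph @ratr K : x y / x + y}.
Proof.
move=> x y; rewrite (@ratr_frac _ (numq x * denq y + numq y * denq x) (denq x * denq y)).
- by rewrite intrM intrD !intrM addf_div ?intr_eq0_pchar0 ?denq_neq0.
- by rewrite mulf_neq0 ?denq_neq0.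
by rewrite intrM intrD !intrM !numqE; ring.
Qed.

Lemma ratrN : {morph @ratr K : x / - x}.
Proof. by move=> x; rewrite /ratr numqN denqN mulrNz mulNr. Qed.

Lemma ratrM : {morph @ratr K : x y / x * y}.
Proof.
move=> x y; rewrite (@ratr_frac _ (numq x * numq y) (denq x * denq y)).
- by rewrite !intrM mulf_div.
- by rewrite mulf_neq0 ?denq_neq0.
by rewrite !intrM !numqE; ring.
Qed.

Fact ratr_zmod_morphism_pchar0 : zmod_morphism (@ratr K).
Proof. by move=> x y; rewrite ratrD ratrN. Qed.

Fact ratr_monoid_morphism_pchar0 : monoid_morphism (@ratr K).
Proof. exact: (ratr_nat K 1%N, ratrM). Qed.

Definition ratr_pchar0 : {rmorphism rat -> K} :=
  HB.pack (@ratr K) (GRing.isZmodMorphism.Build _ _ _ ratr_zmod_morphism_pchar0)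
    (GRing.isMonoidMorphism.Build _ _ _ ratr_monoid_morphism_pchar0).

End RatEmbedding.

Section LeftLog.
Variable K : fieldType.
Implicit Types u v W z : series K.

Lemma powS_None u n : u None = 0 -> powS u n.+1 None = 0.
Proof. by move=> u0; rewrite /= /mulS big_seq1 u0 mulr0. Qed.

Lemma powS_Nd u n a b : u None = 0 ->
  powS u n.+2 (Some (Nd a b)) = powS u n.+1 (Some a) * u (Some b).
Proof.
move=> u0; rewrite [powS u n.+2]/= {1}/mulS /= !big_cons big_nil -/(powS u n.+1).
by rewrite powS_None // u0 mul0r mulr0 !add0r addr0.
Qed.

Lemma eq_powS_le d u v : (forall m, (deg m <= d)%N -> u m = v m) ->
  forall n m, (deg m <= d)%N -> powS u n m = powS v n m.
Proof.
move=> eq_uv; elim=> [|n IH] m le_md //=; apply: eq_big_seq => p /deg_facts dp.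
by rewrite IH ?eq_uv // (leq_trans _ le_md) // -dp ?leq_addl ?leq_addr.
Qed.

Lemma eq_exp_l_le u v m : (forall m', (deg m' <= deg m)%N -> u m' = v m') ->
  exp_l u m = exp_l v m.
Proof. by move=> eq_uv; apply: eq_bigr => i _; rewrite (eq_powS_le eq_uv). Qed.

Lemma exp_l_None u : exp_l u None = 1.
Proof. by rewrite /exp_l /= big_ord_recl big_ord0 /= divr1 addr0. Qed.

Definition exp_tail u w : K :=
  \sum_(i < (wdeg w).-1) powS u i.+2 (Some w) / (i.+2)`!%:R.

Lemma exp_l_Some u w : u None = 0 -> exp_l u (Some w) = u (Some w) + exp_tail u w.
Proof.
move=> u0; rewrite /exp_l /exp_tail /=; case: (wdeg w) (wdeg_gt0 w) => // n _ /=.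
by rewrite !big_ord_recl /= mul1S mul0r add0r divr1.
Qed.

Lemma eq_exp_tail u v w : u None = 0 -> v None = 0 ->
  (forall m, (deg m < wdeg w)%N -> u m = v m) -> exp_tail u w = exp_tail v w.
Proof.
move=> u0 v0; case: w => [| |a b] eq_uv; rewrite /exp_tail ?big_ord0 //.
apply: eq_bigr => i _; rewrite !powS_Nd //; congr (_ * _ / _).
  apply: (eq_powS_le (d := wdeg a)) => // m le_ma; apply: eq_uv.
  by rewrite (leq_ltn_trans le_ma) //= -addn1 leq_add2l wdeg_gt0.
by apply: eq_uv; rewrite /= -add1n leq_add2r wdeg_gt0.
Qed.

Fixpoint log_approx W n : series K :=
  if n is n'.+1 then fun m => if m is Some w then W m - exp_tail (log_approx W n') w else 0
  else zeroS K.

Definition log_of W : series K := fun m => log_approx W (deg m).+1 m.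

Lemma log_approx_None W n : log_approx W n None = 0.
Proof. by case: n. Qed.

Lemma log_approx_stable W d m k : (deg m <= d)%N -> (deg m < k)%N ->
  log_approx W k m = log_of W m.
Proof.
elim: d m k => [|d IH] [w|] k le_md lt_mk; rewrite /log_of ?log_approx_None //.
  by move: (wdeg_gt0 w); rewrite leqNgt (leq_ltn_trans le_md).
case: k lt_mk => [|k] //= lt_mk; congr (_ - _).
apply: eq_exp_tail; rewrite ?log_approx_None // => m lt_mw.
have le_md' : (deg m <= d)%N by rewrite -ltnS (leq_trans lt_mw).
by rewrite (IH m) ?(IH m) // (leq_trans lt_mw).
Qed.

Lemma log_ofP W : W None = 1 -> is_log_l W (log_of W).
Proof.
move=> W1; split=> [|[w|]]; rewrite ?exp_l_None ?log_approx_None //.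
rewrite exp_l_Some; last exact: log_approx_None.
rewrite (@eq_exp_tail _ (log_approx W (wdeg w))) ?log_approx_None //.
  by rewrite {1}/log_of /= subrK.
by move=> m lt_mw; rewrite (log_approx_stable W (leqnn _) lt_mw).
Qed.

Lemma is_log_l_unique_le W z r d : is_log_l W z -> r None = 0 ->
  (forall m, (deg m <= d)%N -> exp_l r m = W m) ->
  forall m, (deg m <= d)%N -> z m = r m.
Proof.
move=> [z0 exp_z] r0; elim: d => [|d IH] exp_r [w|] le_md //; rewrite ?z0 ?r0 //.
  by move: (wdeg_gt0 w); rewrite leqNgt (leq_ltn_trans le_md).
have tailE : exp_tail z w = exp_tail r w.
  apply: eq_exp_tail => // m lt_mw; apply: IH => [m' le_m'd|].
    by apply: exp_r; rewrite (leq_trans le_m'd).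
  by rewrite -ltnS (leq_trans lt_mw).
by apply: (addIr (exp_tail r w)); rewrite -{1}tailE -!exp_l_Some // exp_z exp_r.
Qed.

End LeftLog.

Definition tabulate d (u : series rat) : series rat :=
  let ms := monos_le d in let us := map u ms in fun m => nth 0 us (index m ms).

Lemma tabulateE d u m : (deg m <= d)%N -> tabulate d u m = u m.
Proof. by move=> /mem_monos_le mL; rewrite /tabulate (nth_map m) ?index_mem ?nth_index. Qed.

Definition exp_iota (u : series rat) : series rat :=
  fun m => \sum_(0 <= i < (deg m).+1) powS u i m / (i`!)%:R.

Lemma exp_iotaE : exp_iota = @exp_l rat.
Proof.
apply: functional_extensionality => u; apply: functional_extensionality => m.
by rewrite /exp_iota big_mkord.
Qed.

(* Under call-by-value evaluation, [P] receives the table already computed, so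
   [u] is evaluated once per monomial rather than once per lookup. *)
Definition with_table d u (P : series rat -> bool) : bool := P (tabulate d u).

Definition rhs_rat : series rat := rhs_with (@pS_fast rat).

Lemma rhs_rat_check : with_table 4 rhs_rat (fun r => (r None == 0) &&
  all (fun m => exp_iota r m == mulS (exp_iota (xS rat)) (exp_iota (yS rat)) m) (monos_le 4)).
Proof.
unfold rhs_rat, rhs_with, pS_fast, sparse_terms, ldiv_sparse, ldivw, Delta, delta_mono,
  deltaw, lnprod, exp_iota, powS, assocS, commS, mulS, mulT, addT, tens, addS, oppS,
  scaleS, monoS.
rewrite !bigop.unlock.
vm_compute; reflexivity.
Qed.

Lemma rhs_rat_None : rhs_rat None = 0.
Proof. by have /andP[/eqP + _] := rhs_rat_check; rewrite tabulateE. Qed.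

Lemma exp_rhs_rat m : (deg m <= 4)%N ->
  exp_l rhs_rat m = mulS (exp_l (xS rat)) (exp_l (yS rat)) m.
Proof.
move=> le_m4; have /andP[_ /allP/(_ m (mem_monos_le le_m4))/eqP] := rhs_rat_check.
rewrite !exp_iotaE => <-; apply: eq_exp_l_le => m' le_m'm.
by rewrite tabulateE // (leq_trans le_m'm).
Qed.

Theorem mainTheorem7 (K : fieldType) (charK0 : [pchar K] =i pred0) :
  (exists z : series K, is_log_l (mulS (exp_l (xS K)) (exp_l (yS K))) z) /\
  (forall z : series K, is_log_l (mulS (exp_l (xS K)) (exp_l (yS K))) z ->
     forall m : mono, (deg m <= 4)%N -> z m = rhs K m).
Proof.
pose W := mulS (exp_l (xS K)) (exp_l (yS K)).
have W1 : W None = 1 by rewrite /W /mulS big_seq1 !exp_l_None mulr1.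
split; first by exists (log_of W); apply: log_ofP.
pose phi := ratr_pchar0 charK0.
have rhsE : rhs K = mapS phi rhs_rat.
  by rewrite (rhs_with_pS charK0) -(mapS_rhs_with phi) rhs_with_fast.
move=> z z_log m le_m4; apply: (is_log_l_unique_le z_log _ _ le_m4) => [|m' le_m'4].
  by rewrite rhsE /mapS rhs_rat_None rmorph0.
by rewrite rhsE -(mapS_x phi) -(mapS_y phi) -!mapS_exp -mapS_mul /mapS exp_rhs_rat.
Qed.
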